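(* Let $G$ be a finite group of full exponent. Then the co-prime graph $\Gamma_{CP}(G)$ is minimally edge connected if and only if $G$ is a $p$-group for some prime $p$.
   Context: The co-prime graph $\Gamma_{CP}(G)$ of a finite group $G$ is the simple undirected graph with vertex set $G$ in which two distinct elements $x,y$ are adjacent if and only if $\gcd(o(x),o(y))=1$. $G$ is of full exponent if it contains an element whose order equals the exponent of $G$. A $p$-group is a group of order $p^n$ for a prime $p$. For a connected graph $\Gamma$, an edge cut-set is a set $S$ of edges such that $\Gamma-S$ is disconnected or has just one vertex, and the edge connectivity $\kappa'(\Gamma)$ is the smallest size of an edge cut-set. $\Gamma$ is minimally edge connected if $\kappa'(\Gamma-\epsilon)=\kappa'(\Gamma)-1$ for every edge $\epsilon$ of $\Gamma$. *)

From mathcomp Require Import all_boot all_fingroup all_solvable.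
Set Implicit Arguments. Unset Strict Implicit. Unset Printing Implicit Defensive.


(* Simple graphs on a finite vertex type T, given by their edge set:
   a set of 2-element subsets {x, y} of T. *)

Definition coprime_edges (gT : finGroupType) : {set {set gT}} :=
  [set e : {set gT} | [exists x : gT, exists y : gT,
      [&& x != y, e == [set x; y] & coprime #[x]%g #[y]%g]]].

Definition adj (T : finType) (E : {set {set T}}) : rel T :=
  fun x y => [set x; y] \in E.

Definition graph_connected (T : finType) (E : {set {set T}}) : bool :=
  [forall x : T, forall y : T, connect (adj E) x y].

Definition edge_cutset (T : finType) (E S : {set {set T}}) : bool :=
  (S \subset E) && (~~ graph_connected (E :\: S) || (#|T| == 1%N)).

(* edge connectivity: smallest size of an edge cut-set
   (E itself is always an edge cut-set, so #|E| is a valid start value) *)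
Definition edge_connectivity (T : finType) (E : {set {set T}}) : nat :=
  \big[minn/#|E|]_(S in powerset E | edge_cutset E S) #|S|.

Definition minimally_edge_connected (T : finType) (E : {set {set T}}) : Prop :=
  forall e, e \in E -> edge_connectivity (E :\ e) = (edge_connectivity E).-1.

Definition full_exponent (gT : finGroupType) (G : {set gT}) : Prop :=
  exists2 x, x \in G & #[x]%g = exponent G.

From mathcomp Require Import all_boot all_fingroup all_solvable.
Set Implicit Arguments. Unset Strict Implicit. Unset Printing Implicit Defensive.

(* The identity is adjacent to every other element, so the co-prime graph is
   connected and stays connected after deleting any edge not through 1.
   An element x of order exp(G) is co-prime only to 1, so deleting the edge
   {1, x} isolates x and the edge connectivity is at most 1.  In a p-group
   every edge passes through 1 and isolates a vertex when deleted, dropping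
   the connectivity to 0.  Otherwise Cauchy's theorem gives elements of two
   distinct prime orders; deleting the edge between them keeps the graph
   connected, so the connectivity does not drop. *)

Section EdgeConnectivity.
Variable T : finType.
Implicit Types (E S : {set {set T}}) (e : {set T}).

Lemma edge_connectivity_le E S :
  S \subset E -> edge_cutset E S -> edge_connectivity E <= #|S|.
Proof.
move=> sSE cutS; rewrite /edge_connectivity.
have: S \in index_enum {set {set T}} by rewrite mem_index_enum.
have: (S \in powerset E) && edge_cutset E S by rewrite powersetE sSE.
elim: (index_enum _) => [|S' r IHr] PS //=.
rewrite inE big_cons; case/orP=> [/eqP <-|Sr]; first by rewrite PS geq_minl.
by case: ifP => _; [rewrite geq_min IHr ?orbT | apply: IHr].
Qed.

Lemma edge_connectivity_eq0 E : ~~ graph_connected E -> edge_connectivity E = 0.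
Proof.
move=> disconnE; apply/eqP; rewrite -leqn0 -(cards0 {set T}).
by apply: (edge_connectivity_le (sub0set E)); rewrite /edge_cutset sub0set setD0 disconnE.
Qed.

Lemma edge_connectivity_le1 E e :
  e \in E -> ~~ graph_connected (E :\ e) -> edge_connectivity E <= 1.
Proof.
move=> eE disconn; rewrite -(cards1 e).
have sub_eE : [set e] \subset E by rewrite sub1set.
by apply: (edge_connectivity_le sub_eE); rewrite /edge_cutset sub_eE disconn.
Qed.

Lemma edge_connectivity_bridge E e : e \in E -> ~~ graph_connected (E :\ e) ->
  edge_connectivity (E :\ e) = (edge_connectivity E).-1.
Proof.
move=> eE disconn; rewrite edge_connectivity_eq0 //.
by case: edge_connectivity (edge_connectivity_le1 eE disconn) => [|[]].
Qed.

Lemma edge_connectivity_gt0 E :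
  0 < #|E| -> graph_connected E -> 1 < #|T| -> 0 < edge_connectivity E.
Proof.
move=> E_gt0 connE T_gt1; apply: (big_ind (fun n => 0 < n)) => //.
  by move=> m n; rewrite leq_min => -> ->.
move=> S /andP[_ /andP[_ cutS]]; rewrite card_gt0; apply: contraL cutS => /eqP->.
by rewrite setD0 connE gtn_eqF.
Qed.

Lemma eq_set2 (a b x y : T) :
  [set a; b] = [set x; y] -> (a = x /\ b = y) \/ (a = y /\ b = x).
Proof.
move=> eq_ab_xy.
have /set2P ax : a \in [set x; y] by rewrite -eq_ab_xy set21.
have /set2P bx : b \in [set x; y] by rewrite -eq_ab_xy set22.
have /set2P xa : x \in [set a; b] by rewrite eq_ab_xy set21.
have /set2P ya : y \in [set a; b] by rewrite eq_ab_xy set22.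
intuition congruence.
Qed.

Lemma isolated_vertex_disconnected E (y w : T) :
  (forall z, ~~ adj E y z) -> y != w -> ~~ graph_connected E.
Proof.
move=> isol_y; apply: contra => /forallP/(_ y)/forallP/(_ w)/connectP[[|z p] /= yp ->//].
by case/andP: yp => yz _; move: (isol_y z); rewrite yz.
Qed.

Lemma hub_connected E (c : T) :
  (forall u, u != c -> [set c; u] \in E) -> graph_connected E.
Proof.
move=> hubE; apply/forallP => u; apply/forallP => v; apply: (@connect_trans _ _ c).
  by have [->|uc] := eqVneq u c; last by apply: connect1; rewrite /adj setUC hubE.
by have [->|vc] := eqVneq v c; last by apply: connect1; apply: hubE.
Qed.

End EdgeConnectivity.

Section CoprimeGraph.
Variable gT : finGroupType.
Implicit Types (a b w x z : gT) (G : {group gT}).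

Local Open Scope group_scope.
Local Notation E := (coprime_edges gT).

Lemma coprime_edgeP a b : ([set a; b] \in E) = (a != b) && coprime #[a] #[b].
Proof.
rewrite inE; apply/existsP/andP => [[x /existsP[y]]|[ab cop]].
  case/and3P=> xy /eqP/eq_set2[[-> ->]|[-> ->]] cop; first by split.
  by rewrite eq_sym coprime_sym.
by exists a; apply/existsP; exists b; rewrite ab eqxx cop.
Qed.

Lemma coprime_edge a b : a != 1 -> coprime #[a] #[b] -> [set a; b] \in E.
Proof.
move=> a1 cop; rewrite coprime_edgeP cop andbT.
by apply: contraTneq cop => <-; rewrite /coprime gcdnn order_eq1.
Qed.

Lemma coprime_edge1 w : w != 1 -> [set 1; w] \in E.
Proof. by move=> w1; rewrite coprime_edgeP eq_sym w1 order1 coprime1n. Qed.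

Lemma coprime_edges_isolated w :
  w != 1 -> (forall z, coprime #[w] #[z] -> z = 1) ->
  ~~ graph_connected (E :\ [set 1; w]).
Proof.
move=> w1 cop_w; apply: (isolated_vertex_disconnected (w := 1)) w1 => z.
rewrite /adj in_setD1 coprime_edgeP; apply/and3P => -[+ _ /cop_w z1].
by rewrite z1 setUC eqxx.
Qed.

Lemma coprime_edge1_without a b u :
  a != 1 -> b != 1 -> u != 1 -> [set 1; u] \in E :\ [set a; b].
Proof.
move=> a1 b1 u1; rewrite in_setD1 coprime_edge1 // andbT.
apply: contraNneq a1 => ab1; have: 1 \in [set a; b] by rewrite -ab1 set21.
by rewrite !inE ![1 == _]eq_sym (negbTE b1) orbF.
Qed.

Lemma coprime_edges_connected_without a b :
  a != 1 -> b != 1 -> graph_connected (E :\ [set a; b]).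
Proof.
by move=> a1 b1; apply: (hub_connected (c := 1)) => u; apply: coprime_edge1_without.
Qed.

Lemma exponent_order_coprime_eq1 G x z :
  #[x] = exponent G -> z \in G -> coprime #[x] #[z] -> z = 1.
Proof.
move=> ox Gz cop; apply/eqP; rewrite -order_eq1.
have := dvdn_exponent Gz; rewrite -ox => dvd_zx.
by have := coprime_dvdl dvd_zx cop; rewrite /coprime gcdnn.
Qed.

Lemma pgroup_coprime_order_eq1 p G w z : prime p -> p.-group G ->
  w \in G -> z \in G -> w != 1 -> coprime #[w] #[z] -> z = 1.
Proof.
move=> p_pr pG Gw Gz w1 cop; apply/eqP; rewrite -order_eq1.
have [[|k] ow] := p_natP (mem_p_elt pG Gw); first by rewrite -order_eq1 ow in w1.
have [[|j] oz] := p_natP (mem_p_elt pG Gz); first by rewrite oz.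
by move: cop; rewrite ow oz coprime_pexpl // coprime_pexpr // prime_coprime // dvdnn.
Qed.

Lemma pgroup_or_coprime_pair G :
  (exists2 p, prime p & p.-group G) \/
  exists a, exists2 b, [/\ a \in G, b \in G & a != 1] & b != 1 /\ coprime #[a] #[b].
Proof.
have [G1 | G_gt1] := leqP #|G| 1%N.
  have G_1 : #|G| = 1%N by apply/eqP; rewrite eqn_leq G1 cardG_gt0.
  by left; exists 2; rewrite /pgroup ?G_1.
have p_pr := pdiv_prime G_gt1; have pG := pdiv_dvd #|G|.
have [pGp | not_pG] := boolP ((pdiv #|G|).-group G); first by left; exists (pdiv #|G|).
right; move: not_pG; rewrite /pgroup /pnat cardG_gt0 /= => /allPn[q].
rewrite mem_primes => /and3P[q_pr _ qG]; rewrite inE /= => qp.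
have [a Ga oa] := Cauchy p_pr pG; have [b Gb ob] := Cauchy q_pr qG.
exists a; exists b; rewrite -!order_eq1 ?oa ?ob ?gtn_eqF ?prime_gt1 //.
by rewrite prime_coprime // dvdn_prime2 // eq_sym.
Qed.

Lemma pgroup_coprime_edge p e : prime p -> p.-group [set: gT] ->
  e \in E -> exists2 w, w != 1 & e = [set 1; w].
Proof.
move=> p_pr pG; rewrite inE => /existsP[y /existsP[z /and3P[yz /eqP-> cop]]].
have [<-|y1] := eqVneq y 1; first by exists z; rewrite // eq_sym.
exists y; rewrite // setUC.
by rewrite (pgroup_coprime_order_eq1 p_pr pG (in_setT y) (in_setT z) y1 cop).
Qed.

End CoprimeGraph.

Theorem mainTheorem11 (gT : finGroupType) :
  full_exponent [set: gT] ->
  (minimally_edge_connected (coprime_edges gT) <->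
   exists2 p : nat, prime p & (p.-group [set: gT])%g).
Proof.
move=> [x _ ox]; split=> [minE | [p p_pr pG] e eE]; last first.
  have [w w1 ->] := pgroup_coprime_edge p_pr pG eE.
  apply/edge_connectivity_bridge/coprime_edges_isolated => [|//|z].
    exact: coprime_edge1.
  exact: pgroup_coprime_order_eq1 p_pr pG (in_setT w) (in_setT z) w1.
have [//|[a [b [_ _ a1] [b1 cop_ab]]]] := pgroup_or_coprime_pair [set: gT]%G.
have cop_x (z : gT) : coprime #[x]%g #[z]%g -> z = 1%g.
  exact: exponent_order_coprime_eq1 ox (in_setT z).
have x1 : x != 1%g.
  by apply: contra_neq a1 => x1; apply: cop_x; rewrite x1 order1 coprime1n.
have le1 := edge_connectivity_le1 (coprime_edge1 x1) (coprime_edges_isolated x1 cop_x).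
have : 0 < edge_connectivity (coprime_edges gT :\ [set a; b]).
  apply: edge_connectivity_gt0; last by apply/card_gt1P; exists a, 1%g; rewrite !inE.
    by apply/card_gt0P; exists [set 1%g; a]; apply: coprime_edge1_without.
  exact: coprime_edges_connected_without.
by rewrite minE ?coprime_edge //; case: edge_connectivity le1 => [|[]].
Qed.
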